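(* Let $M$ be the metric space \[M:=\Big\{\Big(a,\tfrac{1}{2^{n}}\Big)\colon a\in[0,1],\ n\in\mathbb{N}\Big\}\cup \Big\{(a,b)\colon a\in\{0,1\},\ b\in\Big[0,\tfrac{1}{2}\Big]\Big\}\subseteq\mathbb{R}^2\] with the metric \[d\big((a,b),(c,e)\big):=\begin{cases} |a-c|, & \text{if }b=e,\\ \min\{a+c,\,2-a-c\}+|b-e|, &\text{if } b\neq e, \end{cases}\] and base point $(0,0)$. Let $x=(0,0)$, $y=(1,0)$, and $\pi_2(a,b)=b$. Let $\varepsilon,\delta>0$ and let $\nu\in\operatorname{conv}\big(\mathrm{Mol}_{\delta,1}(M)\big)$. If there exists $g\in B_{\mathrm{Lip}_0(M)}$ such that $g(\nu)=\|\nu\|$ and $|g(m_{xy})|<\varepsilon$, then there exists $f\in B_{\mathrm{Lip}_0(M)}$ such that \[f(\nu)>\frac{\|\nu\|-\varepsilon-2\delta}{1+\varepsilon+2\delta}\] and $f(p)=0$ for every $p\in M$ with $\pi_2(p)\le\delta$.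
   Context: For a pointed metric space $(M,d,0)$, $\mathrm{Lip}_0(M)$ is the Banach space of Lipschitz functions $f\colon M\to\mathbb{R}$ with $f(0)=0$, normed by the best Lipschitz constant. The Lipschitz-free space $\mathcal{F}(M)$ is the norm-closed linear span of the evaluation functionals $\delta_u$ ($\delta_u(f)=f(u)$), $u\in M$, in $\mathrm{Lip}_0(M)^*$; its dual is $\mathrm{Lip}_0(M)$, and elements of $\mathrm{Lip}_0(M)$ act on $\mathcal{F}(M)$ accordingly. For $u\neq v$ in $M$, the molecule is $m_{uv}=(\delta_u-\delta_v)/d(u,v)\in\mathcal{F}(M)$. For $\delta,\varepsilon>0$, $\mathrm{Mol}_{\delta,\varepsilon}(M)=\{m_{uv}\colon u,v\in M,\ u\neq v,\ \delta<\pi_2(u)<\varepsilon,\ \delta<\pi_2(v)<\varepsilon\}$, and $\operatorname{conv}$ denotes the convex hull. $B_X$ denotes the closed unit ball; $\mathbb{N}=\{1,2,\dots\}$. *)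

From Stdlib Require Import Reals List.
From Coquelicot Require Import Coquelicot.
Import ListNotations.
Open Scope R_scope.

Definition pt := (R * R)%type.

Definition inM (p : pt) : Prop :=
  (exists (a : R) (n : nat), (1 <= n)%nat /\ 0 <= a <= 1 /\ p = (a, (/ 2) ^ n))
  \/ ((fst p = 0 \/ fst p = 1) /\ 0 <= snd p <= / 2).

Definition pi2 (p : pt) : R := snd p.

Definition dist (p q : pt) : R :=
  let (a, b) := p in let (c, e) := q in
  if Req_EM_T b e then Rabs (a - c)
  else Rmin (a + c) (2 - a - c) + Rabs (b - e).

Definition base : pt := (0, 0).

(* f belongs to the closed unit ball of Lip_0(M) (only values on M matter). *)
Definition inBallLip0 (f : pt -> R) : Prop :=
  f base = 0 /\ forall p q, inM p -> inM q -> Rabs (f p - f q) <= dist p q.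

(* A finite formal convex combination sum_i l_i m_{u_i v_i} of molecules,
   represented by the list of triples (l_i, u_i, v_i). *)
Definition combo := list (R * pt * pt)%type.

Definition evalF (f : pt -> R) (nu : combo) : R :=
  fold_right (fun (t : (R * pt * pt)%type) acc =>
    match t with (l, u, v) => l * ((f u - f v) / dist u v) + acc end) 0 nu.

Definition molecule (u v : pt) : combo := [(1, u, v)].

Definition inConvMol (delta eps : R) (nu : combo) : Prop :=
  List.Forall (fun (t : (R * pt * pt)%type) => match t with (l, u, v) =>
            0 <= l /\ inM u /\ inM v /\ u <> v /\
            delta < pi2 u < eps /\ delta < pi2 v < eps end) nu
  /\ fold_right (fun (t : (R * pt * pt)%type) acc => fst (fst t) + acc) 0 nu = 1.

Definition freeNorm (nu : combo) : R :=
  real (Lub_Rbar (fun r => exists f, inBallLip0 f /\ r = evalF f nu)).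

(* Subtract from g the function (a, b) |-> g(0, delta) + K a with K = g(1, delta) - g(0, delta):
   the difference h vanishes at the anchors (0, delta) and (1, delta) and is (1 + |K|)-Lipschitz.
   |K| < eps + 2 delta, because the anchors lie at distance delta above (0, 0) and (1, 0), where g
   takes the values 0 and g(1, 0) = -g(m_xy). In M a point above height delta is at least as far
   from any point at or below height delta as from one of the anchors, so cutting h off to 0 at
   heights <= delta keeps its Lipschitz constant. On a convex combination of molecules the affine
   part costs at most |K|, and nu only sees points above delta, so the cut-off of
   h / (1 + eps + 2 delta) is the required f. *)
From Pilot Require Import Defs.
From Stdlib Require Import Reals List Lra Lia.
From Coquelicot Require Import Coquelicot.
Open Scope R_scope.
Local Notation dist := Defs.dist.

Lemma half_pow_bounds n : (1 <= n)%nat -> 0 <= (/ 2) ^ n <= / 2.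
Proof.
  intros Hn; induction n as [|[|n] IH]; [lia | simpl; lra |].
  assert (Hb : 0 <= (/ 2) ^ S n <= / 2) by (apply IH; lia).
  change ((/ 2) ^ S (S n)) with (/ 2 * (/ 2) ^ S n); lra.
Qed.

Lemma inM_fst_bounds p : inM p -> 0 <= fst p <= 1.
Proof. intros [[a [n [_ [Ha ->]]]] | [[H | H] _]]; simpl; lra. Qed.

Lemma inM_snd_bounds p : inM p -> 0 <= snd p <= / 2.
Proof. intros [[a [n [Hn [_ ->]]]] | [_ H]]; [apply half_pow_bounds |]; assumption. Qed.

Lemma inM_left_edge b : 0 <= b <= / 2 -> inM (0, b).
Proof. intros Hb; right; split; [left; reflexivity | exact Hb]. Qed.

Lemma inM_right_edge b : 0 <= b <= / 2 -> inM (1, b).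
Proof. intros Hb; right; split; [right; reflexivity | exact Hb]. Qed.

Lemma dist_sym p q : dist p q = dist q p.
Proof.
  destruct p as [a b], q as [c e]; unfold dist.
  destruct (Req_EM_T b e), (Req_EM_T e b); try lra.
  - apply Rabs_minus_sym.
  - rewrite Rabs_minus_sym; unfold Rmin.
    destruct (Rle_dec (a + c) (2 - a - c)), (Rle_dec (c + a) (2 - c - a)); lra.
Qed.

Lemma dist_ge_fst p q : inM p -> inM q -> Rabs (fst p - fst q) <= dist p q.
Proof.
  intros Hp%inM_fst_bounds Hq%inM_fst_bounds.
  destruct p as [a b], q as [c e]; simpl in *; unfold dist.
  destruct (Req_EM_T b e); [lra |].
  unfold Rmin; destruct Rle_dec; split_Rabs; lra.
Qed.

Lemma dist_nonneg p q : inM p -> inM q -> 0 <= dist p q.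
Proof.
  intros Hp Hq; pose proof (Rabs_pos (fst p - fst q)); pose proof (dist_ge_fst p q Hp Hq).
  lra.
Qed.

Lemma dist_vertical a b e : a = 0 \/ a = 1 -> dist (a, b) (a, e) = Rabs (b - e).
Proof.
  intros Ha; unfold dist; destruct (Req_EM_T b e) as [-> |].
  - rewrite !Rminus_diag; reflexivity.
  - unfold Rmin; destruct Rle_dec; lra.
Qed.

Lemma dist_left_anchor delta a b : 0 <= a <= 1 -> delta < b ->
  dist (a, b) (0, delta) = a + b - delta.
Proof.
  intros Ha Hb; unfold dist; destruct (Req_EM_T b delta); [lra |].
  unfold Rmin; destruct Rle_dec; split_Rabs; lra.
Qed.

Lemma dist_right_anchor delta a b : 0 <= a <= 1 -> delta < b ->
  dist (a, b) (1, delta) = 1 - a + b - delta.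
Proof.
  intros Ha Hb; unfold dist; destruct (Req_EM_T b delta); [lra |].
  unfold Rmin; destruct Rle_dec; split_Rabs; lra.
Qed.

Lemma dist_anchor_le_crossing delta p q : inM p -> inM q ->
  delta < snd p -> snd q <= delta ->
  dist p (0, delta) <= dist p q \/ dist p (1, delta) <= dist p q.
Proof.
  intros Hp%inM_fst_bounds Hq%inM_fst_bounds Hpd Hqd.
  destruct p as [a b], q as [c e]; cbn [fst snd] in *.
  rewrite dist_left_anchor, dist_right_anchor by lra; unfold dist.
  destruct (Req_EM_T b e); [lra |].
  unfold Rmin; destruct Rle_dec; split_Rabs; lra.
Qed.

Definition lipschitz_on (L : R) (f : pt -> R) : Prop :=
  forall p q, inM p -> inM q -> Rabs (f p - f q) <= L * dist p q.

Lemma inBallLip0_lipschitz f : inBallLip0 f <-> f base = 0 /\ lipschitz_on 1 f.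
Proof.
  unfold inBallLip0, lipschitz_on.
  split; intros [H0 H]; split; try exact H0; intros p q Hp Hq;
    specialize (H p q Hp Hq); lra.
Qed.

Lemma lipschitz_on_weaken L L' f : L <= L' -> lipschitz_on L f -> lipschitz_on L' f.
Proof.
  intros HL Hf p q Hp Hq; pose proof (dist_nonneg p q Hp Hq).
  specialize (Hf p q Hp Hq); nra.
Qed.

Lemma lipschitz_on_sub L L' f g : lipschitz_on L f -> lipschitz_on L' g ->
  lipschitz_on (L + L') (fun p => f p - g p).
Proof.
  intros Hf Hg p q Hp Hq.
  specialize (Hf p q Hp Hq); specialize (Hg p q Hp Hq).
  revert Hf Hg; split_Rabs; lra.
Qed.

Lemma lipschitz_on_div C f : 0 < C -> lipschitz_on C f -> lipschitz_on 1 (fun p => f p / C).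
Proof.
  intros HC Hf p q Hp Hq.
  replace (f p / C - f q / C) with ((f p - f q) / C) by (field; lra).
  rewrite Rabs_div, (Rabs_pos_eq C) by lra.
  apply Rle_div_l; [lra |]; specialize (Hf p q Hp Hq); lra.
Qed.

Lemma lipschitz_on_affine_fst a K : lipschitz_on (Rabs K) (fun p => a + fst p * K).
Proof.
  intros p q Hp Hq.
  replace (a + fst p * K - (a + fst q * K)) with (K * (fst p - fst q)) by ring.
  rewrite Rabs_mult; apply Rmult_le_compat_l; [apply Rabs_pos | exact (dist_ge_fst p q Hp Hq)].
Qed.

Definition truncate_below (delta : R) (f : pt -> R) (p : pt) : R :=
  if Rle_dec (pi2 p) delta then 0 else f p.

Section Truncation.

Variables (delta L : R) (f : pt -> R).
Hypotheses (Hdelta : 0 <= delta <= / 2) (HL : 0 <= L) (Hf : lipschitz_on L f)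
  (Hf0 : f (0, delta) = 0) (Hf1 : f (1, delta) = 0).

Lemma lipschitz_on_crossing p q : inM p -> inM q -> delta < snd p -> snd q <= delta ->
  Rabs (f p) <= L * dist p q.
Proof.
  intros Hp Hq Hpd Hqd.
  destruct (dist_anchor_le_crossing delta p q Hp Hq Hpd Hqd) as [Hle | Hle].
  - pose proof (Hf p (0, delta) Hp (inM_left_edge delta Hdelta)) as Hfp.
    rewrite Hf0, Rminus_0_r in Hfp.
    apply (Rle_trans _ _ _ Hfp), Rmult_le_compat_l; assumption.
  - pose proof (Hf p (1, delta) Hp (inM_right_edge delta Hdelta)) as Hfp.
    rewrite Hf1, Rminus_0_r in Hfp.
    apply (Rle_trans _ _ _ Hfp), Rmult_le_compat_l; assumption.
Qed.

Lemma lipschitz_on_truncate_below : lipschitz_on L (truncate_below delta f).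
Proof.
  intros p q Hp Hq; unfold truncate_below, pi2.
  destruct (Rle_dec (snd p) delta), (Rle_dec (snd q) delta).
  - rewrite Rminus_0_r, Rabs_R0; apply Rmult_le_pos; [exact HL | exact (dist_nonneg p q Hp Hq)].
  - rewrite Rminus_0_l, Rabs_Ropp, dist_sym; apply lipschitz_on_crossing; auto; lra.
  - rewrite Rminus_0_r; apply lipschitz_on_crossing; auto; lra.
  - apply Hf; assumption.
Qed.

End Truncation.

Definition in_mol (delta eps : R) (t : R * pt * pt) : Prop :=
  match t with (l, u, v) =>
    0 <= l /\ inM u /\ inM v /\ u <> v /\ delta < pi2 u < eps /\ delta < pi2 v < eps end.

Definition total_weight (nu : combo) : R :=
  fold_right (fun (t : R * pt * pt) acc => fst (fst t) + acc) 0 nu.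

Lemma inConvMol_delta_lt_half delta eps nu : inConvMol delta eps nu -> delta < / 2.
Proof.
  intros [Hterms Hw]; destruct nu as [| [[l u] v] nu]; [simpl in Hw; lra |].
  apply Forall_inv in Hterms; destruct Hterms as (_ & Hu & _ & _ & [Hdu _] & _).
  pose proof (inM_snd_bounds u Hu); unfold pi2 in Hdu; lra.
Qed.

Lemma evalF_cons f l u v nu :
  evalF f ((l, u, v) :: nu) = l * ((f u - f v) / dist u v) + evalF f nu.
Proof. reflexivity. Qed.

Lemma evalF_molecule f u v : evalF f (molecule u v) = (f u - f v) / dist u v.
Proof. unfold molecule; rewrite evalF_cons; simpl; ring. Qed.

Lemma evalF_sub f g nu : evalF (fun p => f p - g p) nu = evalF f nu - evalF g nu.
Proof.
  induction nu as [| [[l u] v] nu IH]; [simpl; ring |].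
  rewrite !evalF_cons, IH; unfold Rdiv; ring.
Qed.

Lemma evalF_div f C nu : C <> 0 -> evalF (fun p => f p / C) nu = evalF f nu / C.
Proof.
  intros HC; induction nu as [| [[l u] v] nu IH]; [simpl; field; exact HC |].
  rewrite !evalF_cons, IH; unfold Rdiv; ring.
Qed.

Lemma evalF_truncate_below delta eps f nu : List.Forall (in_mol delta eps) nu ->
  evalF (truncate_below delta f) nu = evalF f nu.
Proof.
  intros Hterms; induction Hterms as [| [[l u] v] nu Ht _ IH]; [reflexivity |].
  rewrite !evalF_cons, IH.
  destruct Ht as (_ & _ & _ & _ & [Hu _] & [Hv _]); unfold truncate_below.
  destruct (Rle_dec (pi2 u) delta), (Rle_dec (pi2 v) delta); [lra .. | reflexivity].
Qed.

Lemma evalF_le_lipschitz L f delta eps nu : 0 <= L -> lipschitz_on L f ->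
  List.Forall (in_mol delta eps) nu -> evalF f nu <= L * total_weight nu.
Proof.
  intros HL Hf Hterms; induction Hterms as [| [[l u] v] nu Ht _ IH]; [simpl; lra |].
  rewrite evalF_cons; unfold total_weight; cbn [fold_right fst]; fold (total_weight nu).
  destruct Ht as (Hl & Hu & Hv & _).
  assert (Hslope : (f u - f v) / dist u v <= L).
  { destruct (Req_dec (dist u v) 0) as [E | E].
    - rewrite E, Rdiv_0_r; exact HL.
    - pose proof (dist_nonneg u v Hu Hv); specialize (Hf u v Hu Hv).
      apply Rle_div_l; [lra |]; pose proof (Rle_abs (f u - f v)); lra. }
  pose proof (Rmult_le_compat_l l _ _ Hl Hslope); lra.
Qed.

Lemma evalF_molecule_corners g : g base = 0 ->
  Rabs (evalF g (molecule (0, 0) (1, 0))) = Rabs (g (1, 0)).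
Proof.
  intros Hg0; unfold base in Hg0; rewrite evalF_molecule, Hg0; unfold dist.
  destruct (Req_EM_T 0 0) as [_ | []]; [| reflexivity].
  rewrite !Rminus_0_l, Rabs_Ropp, Rabs_R1, Rdiv_1_r; apply Rabs_Ropp.
Qed.

Lemma anchor_slope_bound g delta : inBallLip0 g -> 0 <= delta <= / 2 ->
  Rabs (g (1, delta) - g (0, delta)) <= Rabs (g (1, 0)) + 2 * delta.
Proof.
  intros [Hg0 Hg] Hd.
  pose proof (Hg (0, delta) (0, 0) (inM_left_edge delta Hd) (inM_left_edge 0 ltac:(lra)))
    as Hleft.
  pose proof (Hg (1, delta) (1, 0) (inM_right_edge delta Hd) (inM_right_edge 0 ltac:(lra)))
    as Hright.
  unfold base in Hg0; rewrite Hg0, Rminus_0_r in Hleft.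
  rewrite dist_vertical in Hleft, Hright by auto.
  revert Hleft Hright; split_Rabs; lra.
Qed.

Theorem mainTheorem2 (eps delta : R) (nu : combo) :
  0 < eps -> 0 < delta -> inConvMol delta 1 nu ->
  (exists g, inBallLip0 g /\ evalF g nu = freeNorm nu /\
     Rabs (evalF g (molecule (0, 0) (1, 0))) < eps) ->
  exists f, inBallLip0 f /\
    evalF f nu > (freeNorm nu - eps - 2 * delta) / (1 + eps + 2 * delta) /\
    (forall p, inM p -> pi2 p <= delta -> f p = 0).
Proof.
  intros Heps Hdel Hnu [g [Hg [Hgnu Hgxy]]].
  pose proof (inConvMol_delta_lt_half _ _ _ Hnu) as Hdhalf.
  destruct Hnu as [Hterms Hw].
  rewrite (evalF_molecule_corners g (proj1 Hg)) in Hgxy.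
  set (K := g (1, delta) - g (0, delta)).
  assert (HK : Rabs K < eps + 2 * delta).
  { pose proof (anchor_slope_bound g delta Hg ltac:(lra)) as Hslope; fold K in Hslope; lra. }
  set (C := 1 + eps + 2 * delta).
  set (aff := fun p : pt => g (0, delta) + fst p * K).
  set (h := fun p => (g p - aff p) / C).
  assert (Hh : lipschitz_on 1 h).
  { apply lipschitz_on_div; [unfold C; lra |].
    apply (lipschitz_on_weaken (1 + Rabs K)); [unfold C; lra |].
    apply lipschitz_on_sub; [apply inBallLip0_lipschitz, Hg | apply lipschitz_on_affine_fst]. }
  exists (truncate_below delta h); split; [| split].
  - apply inBallLip0_lipschitz; split.
    + unfold truncate_below, base, pi2; simpl; destruct Rle_dec; lra.
    + apply lipschitz_on_truncate_below; [lra | lra | exact Hh | |];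
        unfold h, aff, K; simpl; field; unfold C; lra.
  - rewrite (evalF_truncate_below _ _ _ _ Hterms); unfold h.
    rewrite evalF_div, evalF_sub by (unfold C; lra).
    pose proof (evalF_le_lipschitz _ aff _ _ _ (Rabs_pos K) (lipschitz_on_affine_fst _ _) Hterms).
    fold (total_weight nu) in Hw; rewrite Hw in *.
    apply Rmult_lt_compat_r; [apply Rinv_0_lt_compat; unfold C |]; lra.
  - intros p _ Hp; unfold truncate_below; destruct Rle_dec; lra.
Qed.
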